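(* Let $L$ be an orthomodular lattice in which every Mayet-Godowski equation holds. Then $L$ satisfies $n$-Go for every $n\ge3$.
   Context: An orthomodular lattice is a bounded lattice with an operation $'$ satisfying $a''=a$, $a\le b\Rightarrow b'\le a'$, $a\cap a'=0$ and $a\cup a'=1$, in which moreover $a\le b$ implies $b=a\cup(a'\cap b)$. Write $a\perp b$ for $a\le b'$ and $a\to b=a'\cup(a\cap b)$. $n$-Go is the equation $$(a_1\to a_2)\cap(a_2\to a_3)\cap\cdots\cap(a_{n-1}\to a_n)\cap(a_n\to a_1)=(a_n\to a_{n-1})\cap\cdots\cap(a_2\to a_1)\cap(a_1\to a_n).$$ A Mayet-Godowski equation (MGE) is a conditional equality $t_1\cap\cdots\cap t_n=u_1\cap\cdots\cap u_n$, $n\ge2$. Each $t_i$ and $u_i$ is a single variable or a join of two or more distinct variables. The hypotheses are that variables in the same term are mutually orthogonal, and each variable must occur the same number of times among the $t_i$ as among the $u_i$. It holds in $L$ if the equality is true for all assignments satisfying the orthogonality hypotheses. *)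

From mathcomp Require Import all_boot.
Set Implicit Arguments. Unset Strict Implicit. Unset Printing Implicit Defensive.

Record OML := {
  car :> Type;
  meet : car -> car -> car;
  join : car -> car -> car;
  compl : car -> car;
  zero : car;
  one : car;
  meetC : forall a b, meet a b = meet b a;
  joinC : forall a b, join a b = join b a;
  meetA : forall a b c, meet a (meet b c) = meet (meet a b) c;
  joinA : forall a b c, join a (join b c) = join (join a b) c;
  meet_join : forall a b, meet a (join a b) = a;
  join_meet : forall a b, join a (meet a b) = a;
  join0 : forall a, join a zero = a;
  meet1 : forall a, meet a one = a;
  complK : forall a, compl (compl a) = a;
  compl_anti : forall a b, meet a b = a -> meet (compl b) (compl a) = compl b;
  meet_compl : forall a, meet a (compl a) = zero;
  join_compl : forall a, join a (compl a) = one;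
  orthomodular : forall a b, meet a b = a -> b = join a (meet (compl a) b)
}.

Definition ole (L : OML) (a b : L) : Prop := meet a b = a.
Definition perp (L : OML) (a b : L) : Prop := ole a (compl b).
Definition imp (L : OML) (a b : L) : L := join (compl a) (meet a b).

Definition meets (L : OML) (s : seq L) : L := foldr (@meet L) (one L) s.
Definition joins (L : OML) (s : seq L) : L := foldr (@join L) (zero L) s.

(* n-Go, for variables a_1..a_n encoded as a 0 .. a (n-1):
   LHS = (a_1->a_2) ∩ ... ∩ (a_{n-1}->a_n) ∩ (a_n->a_1)
   RHS = (a_n->a_{n-1}) ∩ ... ∩ (a_2->a_1) ∩ (a_1->a_n)  *)
Definition nGo (L : OML) (n : nat) : Prop :=
  forall a : nat -> L,
    meets [seq imp (a i) (a (i.+1 %% n)) | i <- iota 0 n]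
    = meets (rev [seq imp (a i.+1) (a i) | i <- iota 0 n.-1]
             ++ [:: imp (a 0) (a n.-1)]).

(* Mayet-Godowski equations.  Variables are natural numbers; a term is a
   nonempty duplicate-free list of variables, denoting the join of them
   (a single variable when the list has length 1). *)
Definition mge_term (t : seq nat) : bool := (0 < size t) && uniq t.

Definition occ (v : nat) (ts : seq (seq nat)) : nat :=
  sumn [seq count_mem v t | t <- ts].

Definition is_mge (ts us : seq (seq nat)) : Prop :=
  [/\ size ts = size us, 2 <= size ts,
      all mge_term ts, all mge_term us &
      forall v, occ v ts = occ v us].

Definition eval_term (L : OML) (f : nat -> L) (t : seq nat) : L :=
  joins [seq f x | x <- t].

Definition mge_holds (L : OML) (ts us : seq (seq nat)) : Prop :=
  forall f : nat -> L,
    (forall t, t \in ts ++ us -> forall x y, x \in t -> y \in t -> x <> y ->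
        perp (f x) (f y)) ->
    meets [seq eval_term f t | t <- ts] = meets [seq eval_term f u | u <- us].

From mathcomp Require Import all_boot.
From mathcomp Require Import zify.

(* Fix n = m+1 >= 3 and a_0, ..., a_m in L.  Each implication
   a -> b = a' ∪ (a ∩ b) is the join of two orthogonal elements, a' and
   a ∩ b.  Introduce MGE variables 2i (valued a_i') and 2i+1 (valued
   a_i ∩ a_{i+1}, indices mod n).  Then
     a_i -> a_{i+1}  is the term {2i, 2i+1},
     a_{i+1} -> a_i  is the term {2i+2, 2i+1}  (i < m),
     a_0 -> a_m      is the term {0, 2m+1},
   and both sides of n-Go are meets of such two-variable terms in which
   every variable occurs exactly once.  So n-Go is an instance of a single
   Mayet-Godowski equation, whose orthogonality hypotheses hold since
   a' ⊥ a ∩ b and b' ⊥ a ∩ b. *)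

Section OrthomodularFacts.
Variable L : OML.

Lemma meetI (x : L) : meet x x = x.
Proof. by have := meet_join x (meet x x); rewrite join_meet. Qed.

Lemma perp_sym (x y : L) : perp x y -> perp y x.
Proof. by rewrite /perp /ole => /compl_anti; rewrite complK. Qed.

Lemma perp_compl_meetl (x y : L) : perp (compl x) (meet x y).
Proof. by rewrite /perp /ole; apply: compl_anti; rewrite meetC meetA meetI. Qed.

Lemma perp_compl_meetr (x y : L) : perp (compl y) (meet x y).
Proof. by rewrite meetC; apply: perp_compl_meetl. Qed.

End OrthomodularFacts.

Section PairTerms.

Lemma mge_term_pair p q : p != q -> mge_term [:: p; q].
Proof. by move=> npq; rewrite /mge_term /= inE npq. Qed.

Lemma eval_term_pair (L : OML) (f : nat -> L) p q :
  eval_term f [:: p; q] = join (f p) (f q).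
Proof. by rewrite /eval_term /joins /= join0. Qed.

Lemma pair_orthogonal (L : OML) (f : nat -> L) p q : perp (f p) (f q) ->
  forall x y, x \in [:: p; q] -> y \in [:: p; q] -> x <> y -> perp (f x) (f y).
Proof.
move=> fpq x y; rewrite !inE => /orP[]/eqP-> /orP[]/eqP-> // _.
exact: perp_sym.
Qed.

Lemma occ_cat v s1 s2 : occ v (s1 ++ s2) = occ v s1 + occ v s2.
Proof. by rewrite /occ map_cat sumn_cat. Qed.

Lemma occ_rev v s : occ v (rev s) = occ v s.
Proof. by rewrite /occ map_rev sumn_rev. Qed.

Lemma occ_pairs v (p q : nat -> nat) (s : seq nat) :
  occ v [seq [:: p i; q i] | i <- s] =
  count (fun i => p i == v) s + count (fun i => q i == v) s.
Proof.
elim: s => [|i s IH] //=; rewrite /occ /= in IH *; rewrite IH /=; lia.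
Qed.

End PairTerms.

Lemma double_neq_odd i j : i.*2 != j.*2.+1.
Proof. by apply/eqP => /(congr1 odd); rewrite oddS !odd_double. Qed.

Section GoEquation.
Variable m : nat.

Definition go_lhs : seq (seq nat) := [seq [:: i.*2; i.*2.+1] | i <- iota 0 m.+1].

Definition go_rhs : seq (seq nat) :=
  rev [seq [:: i.+1.*2; i.*2.+1] | i <- iota 0 m] ++ [:: [:: 0; m.*2.+1]].

Lemma go_occ v : occ v go_lhs = occ v go_rhs.
Proof.
rewrite /go_lhs /go_rhs occ_cat occ_rev !occ_pairs.
have evens : count (fun i => i.*2 == v) (iota 0 m.+1) =
             (0 == v) + count (fun i => i.+1.*2 == v) (iota 0 m).
  by rewrite /= -[1]/(1 + 0) iotaDl count_map.
have odds : count (fun i => i.*2.+1 == v) (iota 0 m.+1) =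
            count (fun i => i.*2.+1 == v) (iota 0 m) + (m.*2.+1 == v).
  by rewrite -addn1 iotaD count_cat /= addn0.
rewrite evens odds /occ /=; lia.
Qed.

Lemma go_is_mge : 0 < m -> is_mge go_lhs go_rhs.
Proof.
move=> m_gt0; split.
- by rewrite size_cat size_rev !size_map !size_iota addn1.
- by rewrite size_map size_iota.
- by apply/allP => t /mapP[i _ ->]; apply: mge_term_pair; apply: double_neq_odd.
- rewrite all_cat all_rev andbT.
  by apply/allP => t /mapP[i _ ->]; apply: mge_term_pair; apply: double_neq_odd.
- exact: go_occ.
Qed.

Variables (L : OML) (a : nat -> L).

Definition go_assign (v : nat) : L :=
  if odd v then meet (a v./2) (a (v./2.+1 %% m.+1)) else compl (a v./2).

Lemma go_assign_even i : go_assign i.*2 = compl (a i).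
Proof. by rewrite /go_assign odd_double doubleK. Qed.

Lemma go_assign_odd i : go_assign i.*2.+1 = meet (a i) (a (i.+1 %% m.+1)).
Proof.
have half_odd : (i.*2.+1)./2 = i by rewrite -[_.+1]/(true + i.*2) half_bit_double.
by rewrite /go_assign oddS odd_double half_odd.
Qed.

Lemma go_assign_last : go_assign m.*2.+1 = meet (a m) (a 0).
Proof. by rewrite go_assign_odd modnn. Qed.

Lemma go_assign_inner i : i < m -> go_assign i.*2.+1 = meet (a i) (a i.+1).
Proof. by move=> lt_im; rewrite go_assign_odd modn_small. Qed.

Lemma go_assign_orthogonal t : t \in go_lhs ++ go_rhs ->
  forall x y, x \in t -> y \in t -> x <> y -> perp (go_assign x) (go_assign y).
Proof.
rewrite mem_cat /go_lhs /go_rhs mem_cat mem_rev mem_seq1 => /or3P[].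
- move=> /mapP[i _ ->]; apply: pair_orthogonal.
  by rewrite go_assign_even go_assign_odd; apply: perp_compl_meetl.
- move=> /mapP[i]; rewrite mem_iota add0n => /go_assign_inner inner ->.
  apply: pair_orthogonal.
  by rewrite go_assign_even inner; apply: perp_compl_meetr.
- move=> /eqP ->; apply: pair_orthogonal.
  by rewrite -[0]/(0.*2) go_assign_even go_assign_last; apply: perp_compl_meetr.
Qed.

Lemma go_lhs_eval :
  [seq eval_term go_assign t | t <- go_lhs] =
  [seq imp (a i) (a (i.+1 %% m.+1)) | i <- iota 0 m.+1].
Proof.
rewrite -map_comp; apply: eq_map => i /=.
by rewrite eval_term_pair go_assign_even go_assign_odd.
Qed.

Lemma go_rhs_eval :
  [seq eval_term go_assign u | u <- go_rhs] =
  rev [seq imp (a i.+1) (a i) | i <- iota 0 m] ++ [:: imp (a 0) (a m)].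
Proof.
rewrite map_cat map_rev -map_comp /= eval_term_pair -[0]/(0.*2).
rewrite go_assign_even go_assign_last /imp [meet (a m) _]meetC.
congr (rev _ ++ _); apply/eq_in_map => i; rewrite mem_iota add0n => lt_im /=.
by rewrite eval_term_pair go_assign_even go_assign_inner // meetC.
Qed.

End GoEquation.

Theorem theorem6p5 (L : OML) :
  (forall ts us : seq (seq nat), is_mge ts us -> mge_holds L ts us) ->
  forall n : nat, 3 <= n -> nGo L n.
Proof.
move=> all_mge [|m] // n_ge3 a.
have mge_go := all_mge _ _ (@go_is_mge m (ltnW n_ge3)) _
                  (@go_assign_orthogonal m L a).
by rewrite -go_lhs_eval mge_go go_rhs_eval.
Qed.
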